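(* If $f$ and $g$ are directionally invariant functions on $\hat G$ such that the convolution $f*g$ is defined, then $f*g$ is directionally invariant.
   Context: Fix an integer $d>6$ and a compact metric space $\mathcal{D}$. A decorated triangulation is a 2-dimensional abstract simplicial complex with vertex degrees at most $d$ and genus-$0$ surface geometric realization, with decorations in $\mathcal{D}$ on directed edges. A discrete tangent vector is a directed edge $(x_1,x_2)$. $\hat G$ is the set of (automorphism orbits of) triangulations with two marked discrete tangent vectors, written $(x_1,x_2,y_1,y_2)$, a groupoid with units the once-marked triangulations; the leaf of $(x_1,x_2)$ is the set of discrete tangent vectors of its triangulation with counting measure $\lambda_{(x_1,x_2)}$. Convolution: $(f*g)(x_1,x_2,z_1,z_2)=\int f(x_1,x_2,y_1,y_2)g(y_1,y_2,z_1,z_2)\,d\lambda_{(x_1,x_2)}(y_1,y_2)$. A function $f$ on $\hat G$ is directionally invariant if $f(x_1,x_2,y_1,y_2)=f(x_1,x_3,y_1,y_3)$ whenever both $(x_1,x_2,y_1,y_2)$ and $(x_1,x_3,y_1,y_3)$ lie in $\hat G$. *)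

From HB Require Import structures.
From mathcomp Require Import all_boot all_order all_algebra finmap.
From mathcomp Require Import all_classical all_reals all_analysis.
From mathcomp Require Import complex.

Set Implicit Arguments.
Unset Strict Implicit.
Unset Printing Implicit Defensive.
Import Order.TTheory GRing.Theory Num.Theory.

Local Open Scope classical_set_scope.
Local Open Scope fset_scope.
Local Open Scope ring_scope.

Fixpoint pwalk {A : Type} (r : A -> A -> Prop) (x : A) (p : seq A) (y : A)
  : Prop :=
  match p with
  | [::] => x = y
  | z :: p' => r x z /\ pwalk r z p' y
  end.

(* A simplex is a nonempty finite set of vertices; decorations live on
   directed edges (the values of deco on non-edges are irrelevant). *)
Record dcomplex (D : Type) := DComplex {
  simplex : set {fset nat};
  deco : nat -> nat -> D }.

Section Triangulations.
Context {D : Type} (T : dcomplex D).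

Definition is_vertex (v : nat) : Prop := simplex T [fset v].

Definition adj (x y : nat) : Prop := x <> y /\ simplex T [fset x; y].

(* a discrete tangent vector = directed edge *)
Definition dedge (x y : nat) : Prop := adj x y.

Definition is_triangle (s : {fset nat}) : Prop :=
  simplex T s /\ #|` s| = 3.

Definition link_adj (v a b : nat) : Prop := is_triangle [fset v; a; b].

Definition is_2complex : Prop :=
  [/\ (forall s, simplex T s -> s != fset0),
      (forall s t, simplex T s -> t `<=` s -> t != fset0 -> simplex T t),
      (forall s, simplex T s -> #|` s| <= 3)%N &
      (exists s, is_triangle s)].

Definition degree_le (d : nat) : Prop :=
  forall v (s : seq nat), uniq s -> (forall a, a \in s -> adj v a) ->
    (size s <= d)%N.

Definition skel_connected : Prop :=
  forall u v, is_vertex u -> is_vertex v -> exists p, pwalk adj u p v.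

(* surface without boundary: the link of every vertex is a (nonempty,
   finite under the degree bound) cycle, i.e. a nonempty connected
   2-regular graph *)
Definition links_are_cycles : Prop :=
  forall v, is_vertex v ->
  [/\ exists a, adj v a,
      (forall a, adj v a ->
         exists b c, [/\ b <> c, link_adj v a b, link_adj v a c &
                        forall e, link_adj v a e -> e = b \/ e = c]) &
      (forall a b, adj v a -> adj v b -> exists p, pwalk (link_adj v) a p b)].

Definition simple_cycle (c : seq nat) : Prop :=
  [/\ (3 <= size c)%N, uniq c &
      forall i, (i < size c)%N ->
        adj (nth 0%N c i) (nth 0%N c ((i.+1) %% size c))].

Definition cycle_edge (c : seq nat) (a b : nat) : Prop :=
  exists2 i, (i < size c)%N &
    [fset a; b] = [fset nth 0%N c i; nth 0%N c ((i.+1) %% size c)].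

Definition tri_adj_off (c : seq nat) (s t : {fset nat}) : Prop :=
  [/\ is_triangle s, is_triangle t &
      exists a b, [/\ a <> b, (a \in s) && (b \in s),
                      (a \in t) && (b \in t) & ~ cycle_edge c a b]].

(* the complement of the (realization of the) cycle c is disconnected *)
Definition separates (c : seq nat) : Prop :=
  exists s t, [/\ is_triangle s, is_triangle t &
                 ~ exists p, pwalk (tri_adj_off c) s p t].

(* genus 0: every simple closed curve separates (planar surface); it
   suffices, and is necessary, to test simple cycles of the 1-skeleton *)
Definition genus0 : Prop := forall c, simple_cycle c -> separates c.

Definition is_triangulation (d : nat) : Prop :=
  [/\ is_2complex, degree_le d, skel_connected, links_are_cycles & genus0].

End Triangulations.

Definition dc_iso {D : Type} (T T' : dcomplex D) (phi : nat -> nat) : Prop :=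
  [/\ (forall x y, is_vertex T x -> is_vertex T y -> phi x = phi y -> x = y),
      (forall s, simplex T s -> simplex T' [fset phi x | x in s]),
      (forall s', simplex T' s' ->
          exists2 s, simplex T s & s' = [fset phi x | x in s]) &
      (forall x y, dedge T x y -> deco T' (phi x) (phi y) = deco T x y)].

(* Functions on hat G: a function of (T, x1, x2, y1, y2) (only values at
   triangulations T and directed edges (x1,x2), (y1,y2) of T matter)
   which is invariant under isomorphisms of decorated triangulations,
   i.e. a function on the orbits. *)
Definition ghat_fun (D : Type) (R : Type) :=
  dcomplex D -> nat -> nat -> nat -> nat -> R[i].

Definition on_ghat {D : Type} {R : Type} (d : nat) (f : ghat_fun D R) : Prop :=
  forall T T' phi, is_triangulation T d -> is_triangulation T' d ->
    dc_iso T T' phi ->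
    forall x1 x2 y1 y2, dedge T x1 x2 -> dedge T y1 y2 ->
      f T' (phi x1) (phi x2) (phi y1) (phi y2) = f T x1 x2 y1 y2.

Definition dir_invariant {D : Type} {R : Type} (d : nat) (f : ghat_fun D R)
  : Prop :=
  forall T, is_triangulation T d ->
  forall x1 x2 x3 y1 y2 y3,
    dedge T x1 x2 -> dedge T y1 y2 -> dedge T x1 x3 -> dedge T y1 y3 ->
    f T x1 x2 y1 y2 = f T x1 x3 y1 y3.

Section CSum.
Context {R : realType} {I : choiceType}.

Definition cmod (z : R[i]) : R := Num.sqrt (complex.Re z ^+ 2 + complex.Im z ^+ 2).

Definition c_integrable (A : set I) (h : I -> R[i]) : Prop :=
  (\esum_(i in A) ((cmod (h i))%:E) < +oo)%E.

Definition r_sum (A : set I) (h : I -> R) : R :=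
  fine (\esum_(i in A) ((Num.max (h i) 0)%:E))
  - fine (\esum_(i in A) ((Num.max (- h i) 0)%:E)).

Definition c_sum (A : set I) (h : I -> R[i]) : R[i] :=
  Complex (r_sum A (fun i => complex.Re (h i))) (r_sum A (fun i => complex.Im (h i))).
End CSum.

(* the leaf of a unit (x1,x2) in T: all directed edges of T *)
Definition leaf {D : Type} (T : dcomplex D) : set (nat * nat) :=
  [set y | dedge T y.1 y.2].

Definition conv_defined {D : Type} {R : realType} (d : nat)
  (f g : ghat_fun D R) : Prop :=
  forall T, is_triangulation T d ->
  forall x1 x2 z1 z2, dedge T x1 x2 -> dedge T z1 z2 ->
    c_integrable (leaf T)
      (fun y => f T x1 x2 y.1 y.2 * g T y.1 y.2 z1 z2).

Definition ghat_conv {D : Type} {R : realType} (f g : ghat_fun D R) : ghat_fun D R :=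
  fun T x1 x2 z1 z2 =>
    c_sum (leaf T) (fun y => f T x1 x2 y.1 y.2 * g T y.1 y.2 z1 z2).

From HB Require Import structures.
From mathcomp Require Import all_boot all_order all_algebra finmap.
From mathcomp Require Import all_classical all_reals all_analysis.
From mathcomp Require Import complex.

(* For fixed (x1, x2, z1, z2) the integrands of (f*g)(x1,x2,z1,z2) and
   (f*g)(x1,x3,z1,z3) agree at every y = (y1, y2) of the leaf: directional
   invariance of f, applied with the same tangent vector (y1, y2) twice on the
   right, changes x2 into x3, and that of g changes z2 into z3. *)

Local Open Scope ring_scope.

Section EqSum.
Context {R : realType} {I : choiceType} (A : set I).

Lemma eq_r_sum (h k : I -> R) :
  (forall i, A i -> h i = k i) -> r_sum A h = r_sum A k.
Proof.
by move=> hk; rewrite /r_sum; congr (fine _ - fine _);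
  apply: eq_esum => i Ai; rewrite hk.
Qed.

Lemma eq_c_sum (h k : I -> R[i]) :
  (forall i, A i -> h i = k i) -> c_sum A h = c_sum A k.
Proof.
by move=> hk; rewrite /c_sum; congr Complex; apply: eq_r_sum => i Ai;
  rewrite hk.
Qed.

End EqSum.

Local Close Scope ring_scope.

Theorem mainTheorem17 (R : realType) (d : nat) (hd : (6 < d)%N)
  (D : metricType R) (hD : compact [set: D])
  (f g : ghat_fun D R) :
  on_ghat d f -> on_ghat d g ->
  dir_invariant d f -> dir_invariant d g ->
  conv_defined d f g ->
  dir_invariant d (ghat_conv f g).
Proof.
(* c_sum is total. *)
move=> _ _ If Ig _ T hT x1 x2 x3 z1 z2 z3 e12 ez12 e13 ez13.
apply: eq_c_sum => -[y1 y2] ey.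
by rewrite (If T hT x1 x2 x3 y1 y2 y2) ?(Ig T hT y1 y2 y2 z1 z2 z3).
Qed.
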